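(* Let $n\in\mathbb N$, $W=\{w_1,\dots,w_n\}$, $M=\{m_1,\dots,m_n\}$ disjoint, $\mu_{\mathrm{id}}$ the perfect marriage marrying $w_i$ to $m_i$ for all $i$, and $D=\{(i,j)\in\{1,\dots,n\}^2: i\ne j\}$. There exist functions $\succ_W:\{0,1\}^D\to\mathcal P(W,M)$ and $\succ_M:\{0,1\}^D\to\mathcal P(M,W)$ such that for all $\bar x,\bar y\in\{0,1\}^D$: (a) if $\mathrm{DISJ}(\bar x,\bar y)=1$ then $\mu_{\mathrm{id}}$ is the unique stable marriage with respect to $\succ_W(\bar x)$ and $\succ_M(\bar y)$; (b) if $\mathrm{DISJ}(\bar x,\bar y)=0$ then $\mu_{\mathrm{id}}$ is unstable with respect to $\succ_W(\bar x)$ and $\succ_M(\bar y)$.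
   Context: $\mathcal P(W,M)$ is the set of profiles assigning to each woman a preference list, i.e. a totally ordered subset of $M$ (men not on the list are unacceptable); $\mathcal P(M,W)$ analogously. A woman prefers $m$ over $m'$ if $m$ precedes $m'$ on her list, or $m$ is on her list and $m'$ is not (being single counts as having no spouse on the list); analogously for men. A marriage is a one-to-one map between a subset of $W$ and a subset of $M$ (others single). A marriage is stable if every married participant is married to someone on their list and there is no blocking pair $(w,m)$: $w$ prefers $m$ to her current situation and $m$ prefers $w$ to his. $\mathrm{DISJ}(\bar x,\bar y)=1$ if there is no index $(i,j)$ with $x^i_j=y^i_j=1$, and $0$ otherwise. *)

(* Women and men are both indexed by 'I_n:
   woman w_i is (i : 'I_n) on the women's side, man m_i is (i : 'I_n)
   on the men's side; the two sides are kept apart by role (disjoint). *)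
From mathcomp Require Import all_boot.
Set Implicit Arguments. Unset Strict Implicit. Unset Printing Implicit Defensive.

(* A preference list: a duplicate-free sequence (totally ordered subset). *)
Definition pref_list (n : nat) (L : seq 'I_n) : bool := uniq L.

Definition profile (n : nat) := 'I_n -> seq 'I_n.
Definition is_profile (n : nat) (P : profile n) : Prop :=
  forall a, pref_list (P a).

(* Agent with list L prefers b over its current situation s (None = single):
   b precedes s on L, or b is on L and s is not (single counts as not on L). *)
Definition prefers (n : nat) (L : seq 'I_n) (b : 'I_n) (s : option 'I_n) : bool :=
  (b \in L) &&
  match s with
  | None => true
  | Some c => (c \notin L) || (index b L < index c L)
  end.

Definition marriage (n : nat) := {ffun 'I_n -> option 'I_n}.
Definition is_marriage (n : nat) (mu : marriage n) : Prop :=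
  forall w w' m, mu w = Some m -> mu w' = Some m -> w = w'.

Definition spouse_of_man (n : nat) (mu : marriage n) (m : 'I_n) : option 'I_n :=
  [pick w | mu w == Some m].

Definition stable (n : nat) (PW PM : profile n) (mu : marriage n) : Prop :=
  is_marriage mu /\
  (forall w m, mu w = Some m -> m \in PW w /\ w \in PM m) /\
  (forall w m, ~~ (prefers (PW w) m (mu w) && prefers (PM m) w (spouse_of_man mu m))).

Definition mu_id (n : nat) : marriage n := [ffun w => Some w].

Definition Dset (n : nat) := {p : 'I_n * 'I_n | p.1 != p.2}.

Definition DISJ (n : nat) (x y : Dset n -> bool) : bool :=
  [forall d : Dset n, ~~ (x d && y d)].

(** Woman w_i lists exactly the men m_j with x_ij = 1, followed by m_i as her
    least acceptable choice; man m_j lists exactly the women w_i with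
    y_ij = 1, followed by w_j.  Against the identity marriage, (w_i, m_j)
    is then a blocking pair iff x_ij = y_ij = 1, so mu_id is stable iff
    DISJ x y = 1.  When the vectors are disjoint, a stable marriage can only
    marry w_i to m_i (any other pair would need x_ij = y_ij = 1 to be
    mutually acceptable), and no w_i stays single, since otherwise
    (w_i, m_i) blocks. *)
From mathcomp Require Import all_boot.
Set Implicit Arguments. Unset Strict Implicit. Unset Printing Implicit Defensive.

Section PrefThen.

Variables (n : nat) (P : pred 'I_n) (a : 'I_n).
Hypothesis Pa : ~~ P a.

Definition pref_then : seq 'I_n := rcons [seq j <- enum 'I_n | P j] a.

Lemma mem_pref_then b : (b \in pref_then) = (b == a) || P b.
Proof. by rewrite mem_rcons inE mem_filter mem_enum andbT. Qed.

Lemma uniq_pref_then : uniq pref_then.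
Proof. by rewrite rcons_uniq filter_uniq ?enum_uniq // mem_filter (negbTE Pa). Qed.

Lemma prefers_pref_then b : prefers pref_then b (Some a) = P b.
Proof.
have aNP : a \notin [seq j <- enum 'I_n | P j] by rewrite mem_filter (negbTE Pa).
rewrite /prefers !mem_pref_then eqxx /= /pref_then -cats1 !index_cat (negbTE aNP).
rewrite mem_filter mem_enum andbT /= eqxx addn0.
have [Pb|_] := boolP (P b); first by rewrite orbT index_mem mem_filter Pb mem_enum.
by rewrite ltnNge leq_addr andbF.
Qed.

End PrefThen.

Lemma spouse_of_man_mu_id n (m : 'I_n) : spouse_of_man (mu_id n) m = Some m.
Proof.
rewrite /spouse_of_man; case: pickP => [w|/(_ m)]; rewrite ffunE //.
  by move/eqP=> [->].
by rewrite eqxx.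
Qed.

Lemma spouse_of_man_None n (mu : marriage n) m :
  (forall w, mu w != Some m) -> spouse_of_man mu m = None.
Proof.
by move=> notm; rewrite /spouse_of_man; case: pickP => // w; rewrite (negbTE (notm w)).
Qed.

(* [x] read as a function on all pairs, false on the diagonal. *)
Definition pairfun n (x : Dset n -> bool) (i j : 'I_n) : bool :=
  if insub (i, j) is Some d then x d else false.

Lemma pairfun_diag n (x : Dset n -> bool) i : ~~ pairfun x i i.
Proof. by rewrite /pairfun insubF //= eqxx. Qed.

Lemma DISJ_pairfunP n (x y : Dset n -> bool) :
  reflect (forall i j, ~~ (pairfun x i j && pairfun y i j)) (DISJ x y).
Proof.
apply: (iffP forallP) => [disj i j | disj [[i j] ij]].
  by rewrite /pairfun; case: insubP => // d.
by have := disj i j; rewrite /pairfun insubT.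
Qed.

Definition women_pref n (x : Dset n -> bool) : profile n :=
  fun i => pref_then (pairfun x i) i.

Definition men_pref n (y : Dset n -> bool) : profile n :=
  fun j => pref_then (pairfun y ^~ j) j.

Lemma is_profile_women_pref n (x : Dset n -> bool) : is_profile (women_pref x).
Proof. by move=> i; apply: uniq_pref_then; apply: pairfun_diag. Qed.

Lemma is_profile_men_pref n (y : Dset n -> bool) : is_profile (men_pref y).
Proof. by move=> j; apply: uniq_pref_then; apply: pairfun_diag. Qed.

Section IdentityMarriage.

Variables (n : nat) (x y : Dset n -> bool).

Let PW := women_pref x.
Let PM := men_pref y.

Lemma mem_women_pref i j : (j \in PW i) = (j == i) || pairfun x i j.
Proof. exact: mem_pref_then. Qed.

Lemma mem_men_pref j i : (i \in PM j) = (i == j) || pairfun y i j.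
Proof. exact: mem_pref_then. Qed.

Lemma blocks_mu_id w m :
  prefers (PW w) m (mu_id n w) && prefers (PM m) w (spouse_of_man (mu_id n) m)
  = pairfun x w m && pairfun y w m.
Proof.
by rewrite ffunE spouse_of_man_mu_id !prefers_pref_then ?pairfun_diag.
Qed.

Lemma stable_mu_idP : reflect (stable PW PM (mu_id n)) (DISJ x y).
Proof.
apply: (iffP (DISJ_pairfunP x y)) => [disj | [_ [_ noblock]] w m].
  split; first by move=> w w' m; rewrite !ffunE => -[->] [].
  split=> [w m | w m]; last by rewrite blocks_mu_id.
  by rewrite ffunE => -[<-]; rewrite mem_women_pref mem_men_pref eqxx.
by rewrite -blocks_mu_id.
Qed.

Lemma stable_eq_mu_id (mu : marriage n) :
  DISJ x y -> stable PW PM mu -> mu = mu_id n.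
Proof.
move=> /DISJ_pairfunP disj [_ [acceptable noblock]].
have married_diag w m : mu w = Some m -> m = w.
  move=> /acceptable[]; rewrite mem_women_pref mem_men_pref.
  case: eqP => // _ /= xwm; case: eqP => [-> //|_ /= ywm].
  by have := disj w m; rewrite xwm ywm.
apply/ffunP => w; rewrite ffunE.
case muw: (mu w) => [m|]; first by rewrite (married_diag w m muw).
have single_w : spouse_of_man mu w = None.
  apply: spouse_of_man_None => w'; apply/eqP => muw'.
  by move: muw; rewrite (married_diag _ _ muw') muw'.
have := noblock w w; rewrite muw single_w /prefers.
by rewrite mem_women_pref mem_men_pref eqxx.
Qed.

End IdentityMarriage.

Theorem lemma15 (n : nat) :
  exists (fW : (Dset n -> bool) -> profile n) (fM : (Dset n -> bool) -> profile n),
    (forall x, is_profile (fW x)) /\ (forall y, is_profile (fM y)) /\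
    forall x y : Dset n -> bool,
      (DISJ x y = true ->
         stable (fW x) (fM y) (mu_id n) /\
         (forall mu : marriage n, stable (fW x) (fM y) mu -> mu = mu_id n)) /\
      (DISJ x y = false -> ~ stable (fW x) (fM y) (mu_id n)).
Proof.
exists (@women_pref n), (@men_pref n).
split; first exact: is_profile_women_pref.
split; first exact: is_profile_men_pref.
move=> x y; split=> [disj | /negbT/stable_mu_idP //].
by split=> [|mu]; [apply/stable_mu_idP | apply: stable_eq_mu_id].
Qed.
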